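(* Let $n,m,T\in\mathbb{N}$, $L\in[1,T]$, and $u_{[0,T-1]}\in\mathbb{R}^{mT}$. If $u_{[0,T-1]}$ is not persistently exciting of order $n+L$, then there exist a controllable pair $(A,B)\in\mathbb{R}^{n\times n}\times\mathbb{R}^{n\times m}$ and a state sequence $x_{[0,T-L]}$ with $x(t+1)=Ax(t)+Bu(t)$ for all $t\in[0,T-L-1]$ (i.e. $\begin{bmatrix}u_{[0,T-L]}\\ x_{[0,T-L]}\end{bmatrix}\in\mathfrak{B}_{T-L+1}(A,B)$), together with $v\in\mathbb{R}^{mL}$ and $w\in\mathbb{R}^n\setminus\{0\}$, such that $$\begin{bmatrix}v^\top & w^\top\end{bmatrix}\begin{bmatrix}\mathcal{H}_L(u_{[0,T-1]})\\ \mathcal{H}_1(x_{[0,T-L]})\end{bmatrix}=0.$$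
   Context: For integers $a\le b$, $[a,b]=\{c\in\mathbb{Z}: a\le c\le b\}$. For $v:\mathbb{Z}_+\to\mathbb{R}^q$, $v_{[0,T-1]}=\begin{bmatrix}v(0)^\top & \cdots & v(T-1)^\top\end{bmatrix}^\top$. For $k\in[1,T]$ the Hankel matrix of depth $k$ is the $qk\times(T-k+1)$ block matrix $\mathcal{H}_k(v_{[0,T-1]})$ whose $(i,j)$ block ($i\in[0,k-1]$, $j\in[0,T-k]$) is $v(i+j)$; in particular $\mathcal{H}_1(x_{[0,T-L]})=\begin{bmatrix}x(0)&\cdots&x(T-L)\end{bmatrix}$. The sequence $v_{[0,T-1]}$ is persistently exciting of order $k$ if $k\le T$ and $\mathcal{H}_k(v_{[0,T-1]})$ has full row rank (if $k>T$ it is not persistently exciting of order $k$). $\mathfrak{B}_k(A,B)$ denotes the set of stacked vectors $\begin{bmatrix}u_{[0,k-1]}\\ x_{[0,k-1]}\end{bmatrix}$ with $x(t+1)=Ax(t)+Bu(t)$ for $t\in[0,k-2]$. *)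

From HB Require Import structures.
From mathcomp Require Import all_boot all_order all_algebra.
Set Implicit Arguments. Unset Strict Implicit. Unset Printing Implicit Defensive.
Import Order.TTheory GRing.Theory Num.Theory.
Local Open Scope ring_scope.

Definition cvnth (R : nzRingType) (q : nat) (c : 'cV[R]_q) (i : nat) : R :=
  odflt 0 (omap (fun i' : 'I_q => c i' 0) (insub i)).

Definition mxnth (R : nzRingType) (p q : nat) (M : 'M[R]_(p, q)) (i j : nat) : R :=
  odflt 0 (omap (fun i' : 'I_p => odflt 0 (omap (fun j' : 'I_q => M i' j') (insub j)))
                (insub i)).

(* Hankel matrix with block depth k and N block columns of the signal v (blocks in R^q):
   block (i, j) (i < k, j < N) is v (i + j).  The Hankel matrix of depth k of
   v_[0,T-1] is  hankel q k (T - k + 1) v  (a (q k) x (T - k + 1) matrix). *)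
Definition hankel (R : nzRingType) (q k N : nat) (v : nat -> 'cV[R]_q) : 'M[R]_(q * k, N) :=
  \matrix_(r < q * k, j < N) cvnth (v (r %/ q + j)%N) (r %% q)%N.
Arguments hankel {R} q k N v.

Definition hankel1 (R : nzRingType) (n N : nat) (x : nat -> 'cV[R]_n) : 'M[R]_(n, N) :=
  \matrix_(i < n, j < N) x j i 0.
Arguments hankel1 {R} n N x.

Definition persistently_exciting (R : fieldType) (q : nat) (v : nat -> 'cV[R]_q)
  (T k : nat) : bool :=
  (k <= T)%N && row_free (hankel q k (T - k + 1)%N v).

(* Kalman controllability matrix [B  AB  ...  A^(n-1) B] (n x (n m)). *)
Definition ctrb_mx (R : nzRingType) (n m : nat) (A : 'M[R]_n) (B : 'M[R]_(n, m)) :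
  'M[R]_(n, n * m) :=
  \matrix_(i < n, c < n * m) mxnth (A ^+ (c %/ m)%N *m B) i (c %% m)%N.

Definition controllable (R : fieldType) (n m : nat) (A : 'M[R]_n) (B : 'M[R]_(n, m)) : bool :=
  \rank (ctrb_mx A B) == n.

From HB Require Import structures.
From mathcomp Require Import all_boot all_order all_algebra.
From mathcomp Require Import zify ring.
Import Order.TTheory GRing.Theory Num.Theory.
Set Implicit Arguments. Unset Strict Implicit. Unset Printing Implicit Defensive.
Local Open Scope ring_scope.

(* A row vector in the left kernel of the Hankel matrix H_(n+L)(u) is the same
   as a family of polynomials z_c of degree < n + L, one per input channel, such
   that sum_c (z_c(s) u_c)(j) = 0 for every admissible j, where s is the shift
   of sequences.  Choose lam with z_c0(lam) <> 0 and let Q_k = z div (X - lam)^k.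
   Division by X - lam turns (Q_k(s) u)(j+1) into lam (Q_k(s) u)(j) plus
   (Q_(k-1)(s) u)(j) plus an input term, so x_i(j) = -(Q_(n-i)(s) u)(j) is a
   trajectory of the Jordan block A = lam I + S with input matrix B whose rows
   are the values Q_k(lam); the last row is z(lam) <> 0, which makes (A, B)
   controllable.  Finally x_0(j) = -(Q_n(s) u)(j) and deg Q_n < L, so the
   coefficients of Q_n give v, with w the first unit vector.  When n + L > T
   there is no relation to satisfy and a constant family z works. *)

Lemma mxnthE (R : nzRingType) p q (M : 'M[R]_(p, q)) (i : 'I_p) (j : 'I_q) :
  mxnth M i j = M i j.
Proof. by rewrite /mxnth !valK. Qed.

Lemma mxnth_default (R : nzRingType) p q (M : 'M[R]_(p, q)) i j :
  (p <= i)%N -> mxnth M i j = 0.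
Proof. by move=> le_p_i; rewrite /mxnth (@insubN _ _ 'I_p i) // -leqNgt. Qed.

Lemma cvnthE (R : nzRingType) q (c : 'cV[R]_q) (i : 'I_q) : cvnth c i = c i 0.
Proof. by rewrite /cvnth valK. Qed.

Definition polyshift (R : nzRingType) (p : {poly R}) (s : nat -> R) (j : nat) : R :=
  \sum_(i < size p) p`_i * s (j + i)%N.

Lemma polyshift_widen (R : nzRingType) (p : {poly R}) s j N : (size p <= N)%N ->
  polyshift p s j = \sum_(i < N) p`_i * s (j + i)%N.
Proof.
move=> le_pN; rewrite /polyshift -!(big_mkord xpredT (fun i => p`_i * s (j + i)%N)).
rewrite (big_cat_nat (leq0n _) le_pN) /= [X in _ + X]big1_seq ?addr0 //.
move=> i /andP[_]; rewrite mem_index_iota => /andP[le_pi _].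
by rewrite nth_default ?mul0r.
Qed.

Lemma polyshiftD (R : nzRingType) (p q : {poly R}) s j :
  polyshift (p + q) s j = polyshift p s j + polyshift q s j.
Proof.
rewrite (polyshift_widen _ _ (size_polyD p q)).
rewrite (polyshift_widen _ _ (leq_maxl (size p) (size q))).
rewrite (polyshift_widen _ _ (leq_maxr (size p) (size q))) -big_split /=.
by apply: eq_bigr => i _; rewrite coefD mulrDl.
Qed.

Lemma polyshiftZ (R : comNzRingType) (a : R) (p : {poly R}) s j :
  polyshift (a *: p) s j = a * polyshift p s j.
Proof.
rewrite (polyshift_widen _ _ (size_scale_leq a p)) /polyshift mulr_sumr.
by apply: eq_bigr => i _; rewrite coefZ mulrA.
Qed.

Lemma polyshiftC (R : nzRingType) (c : R) s j : polyshift c%:P s j = c * s j.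
Proof. by rewrite (polyshift_widen _ _ (size_polyC_leq1 c)) big_ord1 coefC addn0. Qed.

Lemma polyshiftMX (R : nzRingType) (p : {poly R}) s j :
  polyshift (p * 'X) s j = polyshift p s j.+1.
Proof.
have size_pX : (size (p * 'X)%R <= (size p).+1)%N.
  by apply: leq_trans (size_polyMleq _ _) _; rewrite size_polyX addn2.
rewrite (polyshift_widen _ _ size_pX) big_ord_recl coefMX eqxx mul0r add0r.
by apply: eq_bigr => i _; rewrite coefMX /= addnS.
Qed.

Lemma polyshiftMXsubC (R : comNzRingType) (p : {poly R}) (c : R) s j :
  polyshift (p * ('X - c%:P)) s j = polyshift p s j.+1 - c * polyshift p s j.
Proof.
rewrite mulrBr [p * c%:P]mulrC mul_polyC -scaleNr polyshiftD polyshiftMX.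
by rewrite polyshiftZ mulNr.
Qed.

Definition mpolyshift (R : nzRingType) m (z : nat -> {poly R}) (u : nat -> 'cV[R]_m)
    (j : nat) : R :=
  \sum_(c < m) polyshift (z c) (fun t => u t c 0) j.

Lemma mpolyshift_divXsubC (R : fieldType) m (z q : nat -> {poly R}) (lam : R)
    (u : nat -> 'cV[R]_m) j :
  (forall c, q c = z c %/ ('X - lam%:P)) ->
  mpolyshift z u j = mpolyshift q u j.+1 - lam * mpolyshift q u j
                     + \sum_(c < m) (z c).[lam] * u j c 0.
Proof.
move=> q_def; rewrite /mpolyshift mulr_sumr -sumrB -big_split /=.
apply: eq_bigr => c _; rewrite {1}(divp_eq (z c) ('X - lam%:P)) modp_XsubC.
by rewrite polyshiftD polyshiftMXsubC polyshiftC q_def.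
Qed.

Lemma big_ord_mul_divmod (R : nzRingType) m K (G : nat -> nat -> R) : (0 < m)%N ->
  \sum_(r < m * K) G (r %/ m)%N (r %% m)%N = \sum_(i < K) \sum_(c < m) G i c.
Proof.
move=> m_gt0; elim: K => [|K IH]; first by rewrite muln0 !big_ord0.
rewrite big_ord_recr /= -IH -(big_mkord xpredT (G K)).
rewrite -!(big_mkord xpredT (fun r => G (r %/ m)%N (r %% m)%N)).
have le_mK : (m * K <= m * K.+1)%N by rewrite leq_mul2l leqnSn orbT.
rewrite (big_cat_nat (leq0n (m * K)) le_mK) /=; congr (_ + _).
rewrite -{1}(add0n (m * K)%N) big_addn mulnS addnK.
apply: eq_big_nat => c /andP[_ lt_cm].
by rewrite addnC mulnC divnMDl // modnMDl divn_small // modn_small // addn0.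
Qed.

Definition coefs_rV (R : nzRingType) m K (z : nat -> {poly R}) : 'rV[R]_(m * K) :=
  \row_(r < m * K) (z (r %% m)%N)`_(r %/ m).

Lemma coefs_rV_mul_hankel (R : nzRingType) m K N (z : nat -> {poly R})
    (u : nat -> 'cV[R]_m) :
  (0 < m)%N -> (forall c, size (z c) <= K)%N ->
  coefs_rV m K z *m hankel m K N u = \row_(j < N) mpolyshift z u j.
Proof.
move=> m_gt0 size_z; apply/rowP => j; rewrite !mxE.
under eq_bigr => r _ do rewrite !mxE.
rewrite (@big_ord_mul_divmod _ m K (fun i c => (z c)`_i * cvnth (u (i + j)%N) c)) //.
rewrite exchange_big; apply: eq_bigr => c _; rewrite (polyshift_widen _ _ (size_z c)).
by apply: eq_bigr => i _; rewrite cvnthE addnC.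
Qed.

Lemma coefs_rV_poly (R : nzRingType) m K (y : 'rV[R]_(m * K)) : (0 < m)%N ->
  coefs_rV m K (fun c => \poly_(i < K) mxnth y 0 (i * m + c)%N) = y.
Proof.
move=> m_gt0; apply/rowP => r; rewrite mxE coef_poly ltn_divLR // (mulnC K m) ltn_ord.
by rewrite -divn_eq (mxnthE y 0 r).
Qed.

Lemma coefs_rV_eq0 (R : nzRingType) m K (z : nat -> {poly R}) : (0 < m)%N ->
  (forall c : 'I_m, z c = 0) -> coefs_rV m K z = 0.
Proof.
move=> m_gt0 z0; apply/rowP => r; rewrite !mxE.
by rewrite (z0 (Ordinal (ltn_pmod r m_gt0))) coef0.
Qed.

Definition shiftmx (R : nzRingType) n : 'M[R]_n := \matrix_(i, k) (k == i.+1 :> nat)%:R.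

Lemma mul_shiftmx (R : nzRingType) n p (M : 'M[R]_(n, p)) (i : 'I_n) (c : 'I_p) :
  (shiftmx R n *m M) i c = mxnth M i.+1 c.
Proof.
rewrite mxE; under eq_bigr => k _ do rewrite mxE.
have [lt_i1n | le_n_i1] := ltnP i.+1 n.
  rewrite (bigD1 (Ordinal lt_i1n)) //= eqxx mul1r big1 ?addr0 ?(mxnthE M (Ordinal _)) //.
  by move=> k; rewrite -val_eqE /= => /negbTE ->; rewrite mul0r.
rewrite mxnth_default // big1 // => k _.
by rewrite ltn_eqF ?mul0r // (leq_trans (ltn_ord k) le_n_i1).
Qed.

Lemma mul_shiftmxX (R : nzRingType) n p (M : 'M[R]_(n, p)) k (i : 'I_n) (c : 'I_p) :
  (shiftmx R n ^+ k *m M) i c = mxnth M (i + k) c.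
Proof.
elim: k i => [|k IH] i; first by rewrite expr0 mul1mx addn0 mxnthE.
rewrite exprS -mulmxE -mulmxA mul_shiftmx.
have [lt_i1n | le_n_i1] := ltnP i.+1 n.
  by rewrite (mxnthE _ (Ordinal lt_i1n)) IH /= addSnnS.
by rewrite !mxnth_default // (leq_trans le_n_i1) // -addSnnS leq_addr.
Qed.

Lemma mulmx_ctrb_mx_eq0 (R : nzRingType) n m (A : 'M[R]_n) (B : 'M[R]_(n, m))
    (y : 'rV[R]_n) :
  y *m ctrb_mx A B = 0 -> forall k, (k < n)%N -> y *m (A ^+ k *m B) = 0.
Proof.
move=> y_ann k lt_kn; apply/rowP => c.
have lt_col : (k * m + c < n * m)%N.
  have lt_cm := ltn_ord c; apply: (@leq_trans (k.+1 * m)); first by rewrite mulSn; lia.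
  by rewrite leq_mul2r lt_kn orbT.
have := congr1 (fun M : 'M[R]_(1, n * m) => M 0 (Ordinal lt_col)) y_ann.
rewrite !mxE => col_eq0; rewrite -[in RHS]col_eq0; apply: eq_bigr => i _; congr (_ * _); rewrite [RHS]mxE /=.
have m_gt0 : (0 < m)%N by apply: leq_ltn_trans (ltn_ord c).
by rewrite divnMDl // modnMDl divn_small // modn_small // addn0 mxnthE mxE.
Qed.

(* The Krylov spaces of [M] and of [lam%:M + M] generated by [B] coincide. *)
Lemma krylov_annihilator_shift (R : comNzRingType) n m (lam : R) (M : 'M[R]_n)
    (B : 'M[R]_(n, m)) h (y : 'rV[R]_n) :
  (forall k, (k < h)%N -> y *m ((lam%:M + M) ^+ k *m B) = 0) ->
  forall k, (k < h)%N -> y *m (M ^+ k *m B) = 0.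
Proof.
elim: h y => [|h IH] y y_ann [|k] lt_kh //; first by have := y_ann 0%N lt_kh; rewrite !expr0.
rewrite exprS -mulmxE -mulmxA (mulmxA y); apply: (IH (y *m M)) => // k' lt_k'h.
have -> : y *m M = y *m (lam%:M + M) - lam *: y.
  by rewrite mulmxDr mul_mx_scalar addrAC subrr add0r.
rewrite mulmxBl -scalemxAl -!mulmxA.
have -> : (lam%:M + M) *m ((lam%:M + M) ^+ k' *m B) = (lam%:M + M) ^+ k'.+1 *m B.
  by rewrite exprS -mulmxE mulmxA.
by rewrite (y_ann k'.+1) // (y_ann k') ?scaler0 ?subr0 // ltnW.
Qed.

Lemma shiftmx_annihilator_eq0 (R : idomainType) n m (B : 'M[R]_(n, m))
    (i0 : 'I_n) (c0 : 'I_m) (y : 'rV[R]_n) :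
  val i0 = n.-1 -> B i0 c0 != 0 ->
  (forall k, (k < n)%N -> y *m (shiftmx R n ^+ k *m B) = 0) -> y = 0.
Proof.
move=> i0_last B_i0c0 y_ann; apply/rowP => i; rewrite mxE.
elim/ltn_ind: {i}(val i) {-2}i (erefl (val i)) => t IH i t_def.
have lt_k : (n.-1 - i < n)%N by have := ltn_ord i; lia.
have := congr1 (fun M : 'M[R]_(1, m) => M 0 c0) (y_ann _ lt_k).
rewrite !mxE (bigD1 i) //= big1 => [|l ne_li].
  rewrite addr0 mul_shiftmxX.
  have -> : (i + (n.-1 - i))%N = i0 by rewrite i0_last; have := ltn_ord i; lia.
  by rewrite mxnthE => /eqP; rewrite mulf_eq0 (negbTE B_i0c0) orbF => /eqP.
rewrite mul_shiftmxX; have [lt_li | le_il] := ltnP l i.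
  by rewrite (IH l) ?mul0r // -t_def.
rewrite mxnth_default ?mulr0 //.
have ne_li' : val l <> val i by move=> e; move: ne_li; rewrite -val_eqE e eqxx.
by move: ne_li' le_il; have := ltn_ord i; rewrite /=; lia.
Qed.

Lemma controllable_jordan (R : fieldType) n m (lam : R) (B : 'M[R]_(n, m))
    (i0 : 'I_n) (c0 : 'I_m) :
  val i0 = n.-1 -> B i0 c0 != 0 -> controllable (lam%:M + shiftmx R n) B.
Proof.
move=> i0_last B_i0c0; apply: inj_row_free => y /mulmx_ctrb_mx_eq0 y_ann.
exact: (shiftmx_annihilator_eq0 i0_last B_i0c0 (krylov_annihilator_shift y_ann)).
Qed.

Lemma exists_nonroot (R : numDomainType) (p : {poly R}) :
  p != 0 -> exists lam, p.[lam] != 0.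
Proof.
move=> p_neq0; set rs := [seq i%:R | i <- iota 0 (size p)] : seq R.
have : ~~ all (root p) rs.
  apply/negP => all_roots; have := max_poly_roots p_neq0 all_roots.
  rewrite map_inj_uniq ?iota_uniq; last by move=> a b /eqP; rewrite eqr_nat => /eqP.
  by move/(_ isT); rewrite size_map size_iota ltnn.
by case/allPn => x _ x_nonroot; exists x; rewrite -rootE.
Qed.

Fixpoint traj (R : nzRingType) n m (A : 'M[R]_n) (B : 'M[R]_(n, m)) (x0 : 'cV[R]_n)
    (u : nat -> 'cV[R]_m) (t : nat) : 'cV[R]_n :=
  if t is t'.+1 then A *m traj A B x0 u t' + B *m u t' else x0.

Section Realization.

Variables (R : fieldType) (n m T L : nat) (u : nat -> 'cV[R]_m).
Variables (z : nat -> {poly R}) (lam : R) (c0 : 'I_m).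
Hypotheses (n_gt0 : (0 < n)%N) (size_z : forall c, (size (z c) <= n + L)%N).
Hypothesis z_lam : (z c0).[lam] != 0.
Hypothesis z_annihilates : forall j, (j + n <= T - L)%N -> mpolyshift z u j = 0.

Let Q k c := z c %/ ('X - lam%:P) ^+ k.
Let A := lam%:M + shiftmx R n.
Let B : 'M[R]_(n, m) := \matrix_(i, c) (Q (n - i.+1) c).[lam].
Let x := traj A B (\col_(i < n) - mpolyshift (Q (n - i)%N) u 0) u.

Lemma realization_state j (i : 'I_n) :
  (i + j <= T - L)%N -> x j i 0 = - mpolyshift (Q (n - i)%N) u j.
Proof.
elim: j i => [|j IH] i le_ij; first by rewrite /= mxE.
have Q_step : mpolyshift (Q (n - i.+1)) u j =
    mpolyshift (Q (n - i)) u j.+1 - lam * mpolyshift (Q (n - i)) u j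
    + \sum_(c < m) (Q (n - i.+1) c).[lam] * u j c 0.
  by apply: mpolyshift_divXsubC => c; rewrite /Q -subnSK // exprSr divp_divl.
have next : mxnth (x j) i.+1 0 = - mpolyshift (Q (n - i.+1)) u j.
  have [lt_i1n | le_n_i1] := ltnP i.+1 n.
    by rewrite (mxnthE (x j) (Ordinal lt_i1n) 0) IH //=; lia.
  have -> : (n - i.+1 = 0)%N by lia.
  rewrite mxnth_default // (_ : mpolyshift (Q 0) u j = mpolyshift z u j).
    by rewrite z_annihilates ?oppr0 //; lia.
  by apply: eq_bigr => c _; rewrite /Q expr0 divp1.
rewrite (_ : x j.+1 = A *m x j + B *m u j) // /A mulmxDl mul_scalar_mx mxE mxE mul_shiftmx.
rewrite next !mxE IH; last by lia.
under eq_bigr => c _ do rewrite mxE.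
by rewrite Q_step; ring.
Qed.

Lemma annihilator_realization :
  exists (A : 'M[R]_n) (B : 'M[R]_(n, m)) (x : nat -> 'cV[R]_n)
         (v : 'cV[R]_(m * L)) (w : 'cV[R]_n),
    [/\ controllable A B,
        (forall t : nat, (t < T - L)%N -> x t.+1 = A *m x t + B *m u t),
        w != 0 &
        row_mx v^T w^T *m col_mx (hankel m L (T - L + 1) u) (hankel1 n (T - L + 1) x) = 0].
Proof.
have m_gt0 : (0 < m)%N by apply: leq_ltn_trans (ltn_ord c0).
pose i0 := Ordinal n_gt0.
exists A, B, x, (coefs_rV m L (Q n))^T, ('e_i0)^T; split => //.
- have lt_last : (n.-1 < n)%N by rewrite prednK.
  apply: (@controllable_jordan _ _ _ _ _ (Ordinal lt_last) c0) => //.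
  by rewrite mxE /= prednK // subnn /Q expr0 divp1.
- by apply/eqP => /matrixP/(_ i0 0); rewrite !mxE eqxx /= => /eqP; rewrite oner_eq0.
- rewrite !trmxK mul_row_col coefs_rV_mul_hankel // => [|c]; last first.
    rewrite /Q size_divp ?expf_neq0 ?polyXsubC_eq0 // size_exp_XsubC /=.
    by rewrite leq_subLR.
  apply/rowP => j; rewrite !mxE (bigD1 i0) //= big1 => [|i ne_i].
    rewrite !mxE eqxx mul1r addr0 realization_state ?subn0 ?addrN //=.
    by have := ltn_ord j; lia.
  by rewrite !mxE (negbTE ne_i) andbF mul0r.
Qed.

End Realization.

Theorem lemma1 (R : realFieldType) (n m T L : nat) (u : nat -> 'cV[R]_m) :
  (0 < n)%N -> (0 < m)%N -> (1 <= L <= T)%N ->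
  ~~ persistently_exciting u T (n + L) ->
  exists (A : 'M[R]_n) (B : 'M[R]_(n, m)) (x : nat -> 'cV[R]_n)
         (v : 'cV[R]_(m * L)) (w : 'cV[R]_n),
    [/\ controllable A B,
        (forall t : nat, (t < T - L)%N -> x t.+1 = A *m x t + B *m u t),
        w != 0 &
        row_mx v^T w^T *m col_mx (hankel m L (T - L + 1) u) (hankel1 n (T - L + 1) x) = 0].
Proof.
move=> n_gt0 m_gt0 _ not_pe.
have [lt_T_nL | le_nL_T] := ltnP T (n + L).
  apply: (@annihilator_realization _ _ _ _ _ u (fun=> 1) 0 (Ordinal m_gt0)) => //.
  - by move=> c; rewrite size_poly1; lia.
  - by rewrite hornerC oner_eq0.
  - by move=> j; lia.
move: not_pe; rewrite /persistently_exciting le_nL_T -kermx_eq0.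
case/rowV0Pn => y /sub_kermxP y_ann y_neq0.
pose z c := \poly_(i < n + L) mxnth y 0 (i * m + c)%N.
have y_coefs : coefs_rV m (n + L) z = y by exact: coefs_rV_poly.
have [c0 z_c0] : exists c0 : 'I_m, z c0 != 0.
  apply/existsP; apply: contraNT y_neq0 => /existsPn z_eq0.
  by rewrite -y_coefs coefs_rV_eq0 // => c; apply/eqP/negPn/z_eq0.
have [lam z_lam] := exists_nonroot z_c0.
apply: (annihilator_realization _ _ z_lam) => // [c | j le_jn]; first exact: size_poly.
have lt_j : (j < T - (n + L) + 1)%N by lia.
move: y_ann; rewrite -y_coefs coefs_rV_mul_hankel // => [/rowP/(_ (Ordinal lt_j))|c].
  by rewrite !mxE.
exact: size_poly.
Qed.
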